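(* Let $\Psi$ be the endofunctor on digraphs defined as follows: for a digraph $H$, the vertices of $\Psi H$ are the arcs of $H$, and $((a,b),(c,d))$ is an arc of $\Psi H$ iff $(b,c)$ is an arc of $H$ (equivalently, $(a,b),(b,c),(c,d)$ is a directed walk of length 3 in $H$). Let $\mathcal T$ be a set of oriented trees that is a complete set of obstructions for a digraph $H$. Then the set $\Psi\text{-Sproink}(\mathcal T)=\{T/{\sim_b},\ T/{\sim_r} : T\in\mathcal T\}$ (each with loops removed) is a complete set of obstructions for $\Psi H$.
   Context: Digraphs are finite; homomorphisms are arc-preserving vertex maps. A set $\mathcal F$ is a complete set of obstructions for $H$ if for all digraphs $G$: $G\to H$ iff no $F\in\mathcal F$ admits a homomorphism to $G$. An oriented tree is a digraph whose underlying undirected graph is a tree; its algebraic height $h$ is the minimum number of arcs of a directed path $\vec P_h$ (vertices $0,\dots,h$, arcs $(i,i+1)$) to which it maps. For an oriented tree $T$ of algebraic height $h$ let $t:T\to\vec P_h$ be the unique such homomorphism (for $T$ connected with at least one arc). Blue arcs of $T$ are arcs $(x,y)$ with $t(x)$ even; red arcs are arcs $(x,y)$ with $t(x)$ odd. $x\sim_b y$ iff the (undirected) path in $T$ from $x$ to $y$ consists only of blue arcs; $x\sim_r y$ iff it consists only of red arcs. For an equivalence $\sim$, the quotient $T/{\sim}$ has the classes as vertices and $(X,Y)$ an arc iff some $x\in X,y\in Y$ have $(x,y)\in A(T)$; ''with loops removed'' means arcs $(X,X)$ are deleted. *)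

From mathcomp Require Import all_boot.
Set Implicit Arguments. Unset Strict Implicit. Unset Printing Implicit Defensive.

Record digraph := Digraph { vtx : finType; arc : rel vtx }.

Definition hom (G H : digraph) : Prop :=
  exists f : vtx G -> vtx H, forall x y, arc x y -> arc (f x) (f y).

Definition complete_obstructions (F : digraph -> Prop) (H : digraph) : Prop :=
  forall G : digraph, hom G H <-> ~ (exists D, F D /\ hom D G).

Definition uadj (T : digraph) : rel (vtx T) := fun x y => arc x y || arc y x.

Definition oriented_tree (T : digraph) : Prop :=
  [/\ 0 < #|vtx T|,
      (forall x : vtx T, ~~ arc x x),
      (forall x y : vtx T, arc x y -> ~~ arc y x),
      (forall x y : vtx T, connect (@uadj T) x y) &
      (forall c : seq (vtx T), 3 <= size c -> ~~ ucycleb (@uadj T) c)].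

(* t : T -> P_h is a homomorphism to the directed path 0 -> 1 -> ... -> h. *)
Definition path_hom (T : digraph) (h : nat) (t : vtx T -> nat) : Prop :=
  (forall x, t x <= h) /\ (forall x y, arc x y -> t y = (t x).+1).

Definition alg_height (T : digraph) (h : nat) : Prop :=
  (exists t, @path_hom T h t) /\ (forall h' t', @path_hom T h' t' -> h <= h').

Definition blue_arc (T : digraph) (t : vtx T -> nat) : rel (vtx T) :=
  fun x y => arc x y && ~~ odd (t x).
Definition red_arc (T : digraph) (t : vtx T -> nat) : rel (vtx T) :=
  fun x y => arc x y && odd (t x).

Definition sym_closure (V : Type) (r : rel V) : rel V := fun x y => r x y || r y x.
Definition blue_eq (T : digraph) (t : vtx T -> nat) : rel (vtx T) :=
  connect (sym_closure (blue_arc t)).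
Definition red_eq (T : digraph) (t : vtx T -> nat) : rel (vtx T) :=
  connect (sym_closure (red_arc t)).

Definition classes (T : digraph) (eqv : rel (vtx T)) : {set {set vtx T}} :=
  [set [set y | eqv x y] | x : vtx T].
Definition quot_vtx (T : digraph) (eqv : rel (vtx T)) : finType :=
  {C : {set vtx T} | C \in classes eqv}.
Definition quot_arc (T : digraph) (eqv : rel (vtx T)) : rel (quot_vtx eqv) :=
  fun X Y => (val X != val Y) &&
     [exists x : vtx T, [exists y : vtx T,
        [&& x \in val X, y \in val Y & arc x y]]].
Definition quot_loopless (T : digraph) (eqv : rel (vtx T)) : digraph :=
  @Digraph (quot_vtx eqv) (@quot_arc T eqv).

Definition psi_sproink (TT : digraph -> Prop) (D : digraph) : Prop :=
  exists T, TT T /\ exists h (t : vtx T -> nat),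
    [/\ @alg_height T h, @path_hom T h t &
        (D = quot_loopless (blue_eq t) \/ D = quot_loopless (red_eq t))].

Definition psi_vtx (H : digraph) : finType :=
  {p : vtx H * vtx H | arc p.1 p.2}.
Definition psi_arc (H : digraph) : rel (psi_vtx H) :=
  fun p q => arc (val p).2 (val q).1.
Definition Psi (H : digraph) : digraph := @Digraph (psi_vtx H) (@psi_arc H).

From Pilot Require Import Defs.
From mathcomp Require Import all_boot zify.
From Stdlib Require Import Classical Wf_nat.
(* So that [arc] is the arc relation of [Defs] rather than [path.arc]. *)
Import Defs.
Set Implicit Arguments. Unset Strict Implicit. Unset Printing Implicit Defensive.

(* [Psi] has a left adjoint [Lam], which splits every vertex [v] into an arc
   [v- -> v+]; so [G -> Psi H] iff [Lam G -> H] iff no [T] in the obstruction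
   set maps to [Lam G].  Along an arc of [T] the height [t] goes up by one and a
   homomorphism [T -> Lam G] alternates between the two copies of [G], so by
   connectivity it sends exactly the vertices of one parity of [t] to tails.
   Gluing the two ends of each arc leaving that parity (the blue or the red
   arcs) turns it into a homomorphism [T/~ -> G], and conversely.  Acyclicity
   of [T] keeps the other arcs from being glued, so they survive as arcs of the
   loopless quotient. *)

Lemma connect_invariant (V : finType) (e : rel V) (A : Type) (F : V -> A) :
  (forall x y, e x y -> F x = F y) -> forall x y, connect e x y -> F x = F y.
Proof.
move=> Fe x y /connectP[p + ->]; elim: p x => //= z p IHp x /andP[exz pz].
by rewrite (Fe _ _ exz); apply: IHp.
Qed.

Lemma connect_exit (V : finType) (e : rel V) (S : {set V}) u v :
  connect e u v -> u \in S -> v \notin S ->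
  exists x y, [/\ x \in S, y \notin S & e x y].
Proof.
move/connectP=> [p + ->]; elim: p u => [|w p IHp] u /=; first by move=> _ ->.
move=> /andP[euw pw] uS; case wS: (w \in S); first exact: IHp.
by move=> _; exists u, w; rewrite wS.
Qed.

Lemma uadj_sym (T : digraph) : symmetric (@uadj T).
Proof. by move=> x y; rewrite /uadj orbC. Qed.

(* Acyclicity: a shortest [e]-path from [x] to an undirected neighbour [y]
   other than the arc itself would close a cycle. *)
Lemma tree_connect_adj (T : digraph) (e : rel (vtx T)) x y :
  oriented_tree T -> subrel e (@uadj T) ->
  connect e x y -> x != y -> uadj x y -> e x y.
Proof.
case=> _ _ _ _ acyclic e_uadj /connectP[p + ->] => /shortenP[].
case=> [|a [|c q]] /=; [by rewrite eqxx | by move=> /andP[] |].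
case/and3P=> exa eac pq uq _ _ uxl.
case/negP: (acyclic [:: x, a, c & q] isT); apply/andP; split; last exact: uq.
rewrite /cycle -cats1 cat_path /= andbT.
by rewrite (e_uadj _ _ exa) (e_uadj _ _ eac) (sub_path e_uadj pq) uadj_sym.
Qed.

(* The left adjoint of [Psi]: every vertex [v] of [G] becomes an arc
   [inl v -> inr v], and every arc [v -> w] of [G] an arc [inr v -> inl w]. *)
Definition lam_arc (G : digraph) : rel (vtx G + vtx G)%type :=
  fun p q => match p, q with
             | inl v, inr w => v == w
             | inr v, inl w => arc v w
             | _, _ => false end.
Definition Lam (G : digraph) : digraph := @Digraph (vtx G + vtx G)%type (@lam_arc G).

Lemma hom_Psi_Lam (G H : digraph) : hom G (Psi H) <-> hom (Lam G) H.
Proof.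
split=> [[F homF]|[f homf]].
- exists (fun p => match p with inl v => (val (F v)).1 | inr v => (val (F v)).2 end).
  move=> [v|v] [w|w] //= => [/eqP <- | /homF //]; exact: valP (F v).
exists (fun v => exist (fun p : vtx H * vtx H => arc p.1 p.2)
          (f (inl v), f (inr v)) (homf (inl v) (inr v) (eqxx v)) : psi_vtx H).
by move=> v w /(homf (inr v) (inl w)).
Qed.

Definition is_inl (A B : Type) (p : (A + B)%type) : bool := if p is inl _ then true else false.

Definition lam_val (G : digraph) (p : vtx (Lam G)) : vtx G :=
  match p with inl v | inr v => v end.

Lemma lam_arc_parity (G : digraph) (p q : vtx (Lam G)) : arc p q -> is_inl q = ~~ is_inl p.
Proof. by case: p q => p [q|q]. Qed.

Lemma hom_Lam_parity (T G : digraph) (t : vtx T -> nat) (f : vtx T -> vtx (Lam G))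
    (x0 : vtx T) :
  (forall x y, connect (@uadj T) x y) -> (forall x y, arc x y -> t y = (t x).+1) ->
  (forall x y, arc x y -> arc (f x) (f y)) ->
  exists b, forall x, is_inl (f x) = (odd (t x) == b).
Proof.
move=> conn t_arc homf; pose F x := is_inl (f x) (+) odd (t x).
have F_arc x y : arc x y -> F x = F y.
  move=> axy; rewrite /F (t_arc _ _ axy) (lam_arc_parity (homf _ _ axy)) /=.
  by case: is_inl; case: odd.
have F_uadj x y : uadj x y -> F x = F y by case/orP=> [/F_arc | /F_arc ->].
exists (~~ F x0) => x; rewrite (connect_invariant F_uadj (conn x0 x)) /F.
by case: is_inl; case: odd.
Qed.

Section Quotient.
Variables (T : digraph) (t : vtx T -> nat) (col : rel (vtx T)) (b : bool).
Hypothesis colE : forall x y, col x y = arc x y && (odd (t x) == b).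
Hypothesis t_arc : forall x y, arc x y -> t y = (t x).+1.
Hypothesis tree : oriented_tree T.

Local Notation eqv := (connect (sym_closure col)).
Local Notation Q := (quot_loopless eqv).

Lemma eqv_sym : connect_sym (sym_closure col).
Proof. by apply: sym_connect_sym => x y; rewrite /sym_closure orbC. Qed.

Lemma class_in_classes x : [set y | eqv x y] \in classes eqv.
Proof. by apply/imsetP; exists x. Qed.

Definition cls (x : vtx T) : vtx Q :=
  exist (fun C => C \in classes eqv) _ (class_in_classes x).

Lemma class_eq x y : eqv x y -> [set z | eqv x z] = [set z | eqv y z].
Proof. by move=> exy; apply/setP => z; rewrite !inE (same_connect eqv_sym exy). Qed.

Lemma cls_eq x y : eqv x y -> cls x = cls y.
Proof. by move/class_eq => exy; apply: val_inj. Qed.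

Lemma quot_vtx_cls (X : vtx Q) x : x \in val X -> X = cls x.
Proof.
case: X => C CQ /= xC; apply: val_inj => /=.
by case/imsetP: CQ xC => a _ ->; rewrite inE => /class_eq.
Qed.

Lemma eqv_arc x y : arc x y -> odd (t x) == b -> eqv x y.
Proof. by move=> axy xb; apply: connect1; rewrite /sym_closure colE axy xb. Qed.

(* An arc of the wrong colour cannot be bypassed by a path of the right colour,
   since [T] has no cycles. *)
Lemma arc_not_eqv x y : arc x y -> odd (t x) != b -> ~~ eqv x y.
Proof.
have [_ noloop antisym _ _] := tree; move=> axy xb; apply/negP => exy.
have col_uadj : subrel (sym_closure col) (@uadj T).
  move=> u w; rewrite /sym_closure /uadj !colE.
  by case/orP=> [/andP[-> _] | /andP[-> _]]; rewrite ?orbT.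
have nxy : x != y by apply: contraTneq axy => ->; exact: noloop.
move: (tree_connect_adj tree col_uadj exy nxy); rewrite /uadj axy => /(_ isT).
by rewrite /sym_closure !colE axy (negbTE xb) (negbTE (antisym _ _ axy)).
Qed.

Lemma quot_arc_cls x y : arc x y -> ~~ eqv x y -> arc (cls x) (cls y).
Proof.
move=> axy nexy; apply/andP; split.
  by apply: contra nexy => /eqP/setP/(_ y); rewrite !inE connect0.
by apply/existsP; exists x; apply/existsP; exists y; rewrite !inE !connect0 axy.
Qed.

Lemma hom_quot_Lam G : hom Q G -> hom T (Lam G).
Proof.
case=> phi homphi.
exists (fun x => if odd (t x) == b then inl (phi (cls x)) else inr (phi (cls x))).
move=> x y axy; have oy : odd (t y) = ~~ odd (t x) by rewrite (t_arc axy).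
case: ifP => xb.
- have -> : (odd (t y) == b) = false by rewrite oy -(eqP xb); case: odd.
  by rewrite /= (cls_eq (eqv_arc axy xb)).
have -> : (odd (t y) == b) = true by move: xb; rewrite oy; case: odd; case: b.
by apply/homphi/quot_arc_cls; rewrite // arc_not_eqv ?xb.
Qed.

Lemma hom_Lam_quot G (f : vtx T -> vtx (Lam G)) :
  (forall x y, arc x y -> arc (f x) (f y)) ->
  (forall x, is_inl (f x) = (odd (t x) == b)) -> hom Q G.
Proof.
move=> homf f_side; have [/card_gt0P[x0 _] _ _ _ _] := tree.
pose g x := lam_val (f x).
have g_eqv x y : eqv x y -> g x = g y.
  apply: connect_invariant => {}x {}y.
  suff g_col u w : col u w -> g u = g w by case/orP=> [/g_col | /g_col ->].
  rewrite colE => /andP[auw ub]; have := homf _ _ auw; have := f_side u.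
  by rewrite ub /g; case: (f u) => // v _; case: (f w) => //= w' /eqP ->.
pose phi (X : vtx Q) := g (odflt x0 [pick z in val X]).
have phi_cls x : phi (cls x) = g x.
  rewrite /phi; case: pickP => [z|/(_ x)]; last by rewrite inE connect0.
  by rewrite inE /= => exz; rewrite (g_eqv _ _ exz).
exists phi => X Y /andP[nXY /existsP[x /existsP[y /and3P[xX yY axy]]]].
rewrite (quot_vtx_cls xX) (quot_vtx_cls yY) !phi_cls /g.
case xb: (odd (t x) == b).
  by case/eqP: nXY; rewrite (quot_vtx_cls xX) (quot_vtx_cls yY) (cls_eq (eqv_arc axy xb)).
have := homf _ _ axy; have := f_side x; rewrite xb.
by case: (f x) => // v _; case: (f y).
Qed.

End Quotient.

Lemma hom_Lam_quot_iff (T G : digraph) (t : vtx T -> nat) :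
  oriented_tree T -> (forall x y, arc x y -> t y = (t x).+1) ->
  hom T (Lam G) <->
  hom (quot_loopless (blue_eq t)) G \/ hom (quot_loopless (red_eq t)) G.
Proof.
move=> tree t_arc.
have blueE x y : blue_arc t x y = arc x y && (odd (t x) == false).
  by rewrite /blue_arc; case: odd.
have redE x y : red_arc t x y = arc x y && (odd (t x) == true).
  by rewrite /red_arc; case: odd.
split=> [[f homf] | [/(hom_quot_Lam blueE t_arc tree) | /(hom_quot_Lam redE t_arc tree)]] //.
have [/card_gt0P[x0 _] _ _ conn _] := tree.
have [[] f_side] := hom_Lam_parity x0 conn t_arc homf.
- by right; exact: (hom_Lam_quot redE tree homf f_side).
- by left; exact: (hom_Lam_quot blueE tree homf f_side).
Qed.

Section PathHomomorphism.
Variables (T : digraph) (tree : oriented_tree T).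
Local Notation n := #|vtx T|.

Definition uadj_in (S : {set vtx T}) : rel (vtx T) :=
  fun u v => [&& uadj u v, u \in S & v \in S].

Definition connected_in (S : {set vtx T}) : Prop :=
  forall a c, a \in S -> c \in S -> connect (uadj_in S) a c.

(* The window around [n] leaves room to step down by one at each of the
   at most [n] extensions, so the labels never hit the truncation at [0]. *)
Definition height_on (S : {set vtx T}) (t : vtx T -> nat) : Prop :=
  (forall x y, x \in S -> y \in S -> arc x y -> t y = (t x).+1) /\
  (forall z, z \in S -> n - #|S| < t z <= n + #|S|).

Lemma connected_in_neighbour S x y z :
  connected_in S -> x \in S -> y \notin S -> uadj x y ->
  z \in S -> uadj y z -> z = x.
Proof.
move=> connS xS yS uxy zS uyz; apply/eqP/contraT => nzx.
pose e u w := uadj u w && ~~ ((u == x) && (w == y)).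
have cxz : connect e x z.
  apply: connect_sub (connS x z xS zS) => u w /and3P[uuw _ wS].
  by apply: connect1; rewrite /e uuw; apply: contra yS => /andP[_ /eqP <-].
have cxy : connect e x y.
  by apply: connect_trans cxz (connect1 _); rewrite /e uadj_sym uyz (negbTE nzx).
have nxy : x != y by apply: contraNneq yS => <-.
have e_uadj : subrel e (@uadj T) by move=> u w /andP[].
have := tree_connect_adj tree e_uadj cxy nxy uxy.
by rewrite /e uxy !eqxx.
Qed.

Lemma connected_inU1 S x y :
  connected_in S -> x \in S -> uadj x y -> connected_in (y |: S).
Proof.
move=> connS xS uxy.
have S_yS : subrel (uadj_in S) (connect (uadj_in (y |: S))).
  by move=> u w /and3P[uuw uS wS]; apply: connect1; rewrite /uadj_in uuw !inE uS wS !orbT.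
have cy a : a \in y |: S -> connect (uadj_in (y |: S)) y a.
  move=> /setU1P[-> | aS]; first exact: connect0.
  apply: connect_trans (connect_sub S_yS (connS x a xS aS)).
  by apply: connect1; rewrite /uadj_in uadj_sym uxy !inE eqxx xS orbT.
have sym : connect_sym (uadj_in (y |: S)).
  by apply: sym_connect_sym => u w; rewrite /uadj_in uadj_sym (andbC (u \in _)).
by move=> a c aS cS; apply: connect_trans (cy c cS); rewrite sym cy.
Qed.

Lemma height_onU1 S t x y :
  height_on S t -> connected_in S -> x \in S -> y \notin S -> uadj x y ->
  height_on (y |: S)
    (fun z => if z == y then (if arc x y then (t x).+1 else (t x).-1) else t z).
Proof.
have [_ noloop antisym _ _] := tree.
move=> [t_arc t_win] connS xS yS uxy; set t' := fun z => _.
have t'S z : z \in S -> t' z = t z.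
  by move=> zS; rewrite /t' ifN //; apply: contraNneq yS => <-.
have t'y : t' y = if arc x y then (t x).+1 else (t x).-1 by rewrite /t' eqxx.
have nbr := connected_in_neighbour connS xS yS uxy.
have S_lt_n : #|S| < n.
  by rewrite -(cardsC S) -addn1 leq_add2l; apply/card_gt0P; exists y; rewrite inE.
split=> [u w | z]; last rewrite cardsU1 yS.
- case/setU1P=> [-> | uS] /setU1P[-> | wS] auw.
  + by rewrite (negbTE (noloop y)) in auw.
  + have wx : w = x by apply: nbr; rewrite // /uadj auw.
    rewrite wx in auw *; rewrite (t'S x xS) t'y (negbTE (antisym _ _ auw)).
    have := t_win x xS; lia.
  + have ux : u = x by apply: nbr; rewrite // /uadj auw orbT.
    by rewrite ux (t'S x xS) t'y -ux auw.
  + by rewrite !t'S //; apply: t_arc.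
- case/setU1P=> [-> | zS]; first by rewrite t'y; have := t_win x xS; case: arc; lia.
  by rewrite t'S //; have := t_win z zS; lia.
Qed.

Lemma height_on_grow k (S : {set vtx T}) t :
  n - #|S| <= k -> S != set0 -> connected_in S -> height_on S t ->
  exists t', height_on [set: vtx T] t'.
Proof.
have [_ _ _ conn _] := tree.
elim: k S t => [|k IHk] S t cardS /set0Pn[r rS] connS htS;
  (have [ST | nST] := eqVneq S [set: vtx T]; first by exists t; rewrite -ST);
  have ltSn : #|S| < n by rewrite -cardsT proper_card // properT.
  by move: cardS; lia.
have /subsetPn[v _ vS] : ~~ ([set: vtx T] \subset S) by rewrite subTset.
have [x [y [xS yS uxy]]] := connect_exit (conn r v) rS vS.
apply: IHk (height_onU1 htS connS xS yS uxy).
- by move: cardS; rewrite cardsU1 yS; lia.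
- by apply/set0Pn; exists y; rewrite setU11.
- exact: connected_inU1 connS xS uxy.
Qed.

Lemma oriented_tree_path_hom : exists t, @path_hom T (2 * n) t.
Proof.
have [/card_gt0P[r _] noloop _ _ _] := tree.
have [t [t_arc t_win]] : exists t, height_on [set: vtx T] t.
  apply: (@height_on_grow n [set r] (fun=> n)).
  - by rewrite cards1; lia.
  - by apply/set0Pn; exists r; rewrite set11.
  - by move=> a c /set1P-> /set1P->.
  split=> [x y /set1P-> /set1P-> | z _]; first by rewrite (negbTE (noloop r)).
  have : 0 < n by apply/card_gt0P; exists r.
  by rewrite cards1; lia.
exists t; split=> [z | x y]; last exact: t_arc.
by have := t_win z (in_setT z); rewrite cardsT; lia.
Qed.

Lemma alg_height_exists : exists h t, @alg_height T h /\ @path_hom T h t.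
Proof.
have [t0 ht0] := oriented_tree_path_hom.
have [h [[[t ht] h_min] _]] := @dec_inh_nat_subset_has_unique_least_element
  (fun h => exists t, @path_hom T h t) (fun h => classic _) (ex_intro _ _ (ex_intro _ _ ht0)).
exists h, t; split=> //; split=> [|h' t' ht']; first by exists t.
by apply/leP/h_min; exists t'.
Qed.

End PathHomomorphism.

Lemma tree_obstruction_hom_Lam (TT : digraph -> Prop) (G : digraph) :
  (forall T, TT T -> oriented_tree T) ->
  (exists T, TT T /\ hom T (Lam G)) <-> (exists D, psi_sproink TT D /\ hom D G).
Proof.
move=> trees; split=> [[T [TT_T homT]] | [D [[T [TT_T [h [t [_ [_ t_arc] DE]]]]] homD]]].
- have [h [t [hT tP]]] := alg_height_exists (trees T TT_T).
  have [homQ | homQ] := (hom_Lam_quot_iff G (trees T TT_T) tP.2).1 homT.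
  + exists (quot_loopless (blue_eq t)); split=> //.
    by exists T; split=> //; exists h, t; split=> //; left.
  + exists (quot_loopless (red_eq t)); split=> //.
    by exists T; split=> //; exists h, t; split=> //; right.
exists T; split=> //; apply/(hom_Lam_quot_iff G (trees T TT_T) t_arc).
by case: DE homD => ->; [left | right].
Qed.

Theorem mainTheorem12 (H : digraph) (TT : digraph -> Prop) :
  (forall T, TT T -> oriented_tree T) ->
  complete_obstructions TT H ->
  complete_obstructions (psi_sproink TT) (Psi H).
Proof.
by move=> trees obsH G; rewrite hom_Psi_Lam obsH (tree_obstruction_hom_Lam G trees).
Qed.
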